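(* There exist a transition system $\mathcal T$, an information source $\sigma_h$, and a dynamic heuristic $h$ over $\sigma_h$ that is dyn-admissible, dyn-consistent and dyn-monotonic (and whose information is only changed by update operations along transitions) such that some run of Dynamic A* with \texttt{reeval} set to false using $h$ reopens a state, i.e., removes a state from Closed. Moreover, in this run, omitting the reopening would cause the algorithm to return a suboptimal solution.
   Context: A transition system is $\mathcal T=\langle S,L,c,T,s_I,S_G\rangle$ with finite states $S$, finite labels $L$, cost function $c:L\to\mathbb R_{\ge0}$, transitions $T\subseteq S\times L\times S$, initial state $s_I$, goal states $S_G\subseteq S$; $h^*(s)$ is the minimal cost of a path from $s$ to a goal ($\infty$ if none). An information source $\sigma$ consists of a set $\mathcal I_\sigma$, $\iota_0^\sigma\in\mathcal I_\sigma$, $\mathrm{update}_\sigma:\mathcal I_\sigma\times T\to\mathcal I_\sigma$, $\mathrm{refine}_\sigma:\mathcal I_\sigma\times S\to\mathcal I_\sigma$. Reachable information: $\iota_n$ is reachable if obtained from $\iota_0^\sigma$ by a sequence of refine steps on states and update steps on transitions $e_1,\dots,e_n$, where each refined state and each origin of an updated transition is $s_I$ or the target of an earlier updated transition. A dynamic heuristic over $\sigma$ is $h:S\times\mathcal I_\sigma\to\mathbb R_{\ge0}\cup\{\infty\}$. It is dyn-admissible if $h(s,\iota)\le h^*(s)$; dyn-consistent if $h(s,\iota)\le c(\ell)+h(s',\iota)$ for all $\langle s,\ell,s'\rangle\in T$; each for all states and all reachable $\iota$; and dyn-monotonic if $h(s,\iota)\le h(s,\mathrm{update}_\sigma(\iota,t))$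 and $h(s,\iota)\le h(s,\mathrm{refine}_\sigma(\iota,s'))$ for all reachable $\iota$, all $s,s'\in S$, all $t\in T$. Parent source $\sigma_p$: $\mathcal I_{\sigma_p}$ = partial functions $S\rightharpoonup\mathbb R_{\ge0}\times(T\cup\{\bot\})$; $\iota_0=\{s_I\mapsto\langle0,\bot\rangle\}$; refine is the identity; $\mathrm{update}(\iota,\langle s,\ell,s'\rangle)$ with $\iota(s)=\langle g,\cdot\rangle$ changes only $s'$, setting it to $\langle g+c(\ell),\langle s,\ell,s'\rangle\rangle$ if $\iota(s')$ is undefined or has $g$-component $\ge g+c(\ell)$, otherwise unchanged. Dynamic A* takes $\mathcal T$, sources $\sigma_p,\sigma_h$, a dynamic heuristic $h$ over $\sigma_h$ and a Boolean flag \texttt{reeval}. Notation: at any moment $g(s)$ is the $g$-component of the current $\mathcal I(\sigma_p)(s)$ and $h(s)$ denotes $h(s,\mathcal I(\sigma_h))$ for the current $\mathcal I(\sigma_h)$. Open is a priority queue of entries $\langle s,g,h\rangle$ (duplicates allowed), popped by minimal stored value $g+h$ (ties arbitrary). Algorithm: 1. $\mathcal I(\sigma):=\iota_0^\sigma$ for both sources; $S_{\mathrm{known}}:=\{s_I\}$; Closed $:=\emptyset$; Open empty. If $h(s_I)<\infty$ insert $\langle s_I,g(s_I),h(s_I)\rangle$. 2. While Open is nonempty: pop an entry $\langle s,\hat g,\hat h\rangle$ of minimal $\hat g+\hat h$. If $s\in$ Closed, continue with the next iteration. Otherwise set $\mathcal I(\sigma):=\mathrm{refine}_\sigma(\mathcal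 I(\sigma),s)$ for both sources. If \texttt{reeval} is true and $\hat h<h(s)$: if $h(s)<\infty$ insert $\langle s,g(s),h(s)\rangle$; continue with the next iteration (this is a re-evaluation). Otherwise add $s$ to Closed ($s$ is expanded). If $s\in S_G$, return the path obtained by following the parent pointers of $\mathcal I(\sigma_p)$ from $s$ back to $s_I$. Otherwise, for each $t=\langle s,\ell,s'\rangle\in T$ in some order: let $old:=g(s')$ if $s'\in S_{\mathrm{known}}$ and undefined otherwise; set $\mathcal I(\sigma):=\mathrm{update}_\sigma(\mathcal I(\sigma),t)$ for both sources; add $s'$ to $S_{\mathrm{known}}$; if $h(s')=\infty$ skip $s'$; else if $old$ is undefined insert $\langle s',g(s'),h(s')\rangle$; else if $old>g(s')$, remove $s'$ from Closed if it is there (reopening) and insert $\langle s',g(s'),h(s')\rangle$. 3. Return ''unsolvable''. *)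

From mathcomp Require Import all_boot.
From Stdlib Require Import Reals.

Set Implicit Arguments.
Unset Strict Implicit.
Unset Printing Implicit Defensive.

Inductive ext := Fin of R | Inf.

Definition ext_le (x y : ext) : Prop :=
  match x, y with
  | _, Inf => True
  | Inf, Fin _ => False
  | Fin a, Fin b => (a <= b)%R
  end.

Definition ext_lt (x y : ext) : Prop :=
  match x, y with
  | Inf, _ => False
  | Fin _, Inf => True
  | Fin a, Fin b => (a < b)%R
  end.

Definition ext_addR (c : R) (x : ext) : ext :=
  match x with Fin a => Fin (c + a)%R | Inf => Inf end.

Record TS := MkTS {
  St : finType;
  Lab : finType;
  cost : Lab -> R;
  cost_ge0 : forall l, (0 <= cost l)%R;
  Tr : {set (St * Lab * St)};
  sI : St;
  goal : {set St}
}.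

Section DynAstar.
Variable T : TS.

Definition tr := (St T * Lab T * St T)%type.
Definition t_from (t : tr) : St T := t.1.1.
Definition t_lab (t : tr) : Lab T := t.1.2.
Definition t_to (t : tr) : St T := t.2.

Inductive is_path : St T -> seq tr -> St T -> Prop :=
| path_nil s : is_path s [::] s
| path_cons t p s' : t \in @Tr T -> is_path (t_to t) p s' ->
                     is_path (t_from t) (t :: p) s'.

Definition path_cost (p : seq tr) : R :=
  foldr (fun t acc => (@cost T (t_lab t) + acc)%R) 0%R p.

(** is_hstar s v : v = h^*(s), the minimal cost of a path from s to a goal
    state (∞ if there is none). *)
Definition is_hstar (s : St T) (v : ext) : Prop :=
  match v with
  | Inf => forall p g, g \in @goal T -> ~ is_path s p g
  | Fin r =>
      (exists p g, g \in @goal T /\ is_path s p g /\ path_cost p = r) /\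
      (forall p g, g \in @goal T -> is_path s p g -> (r <= path_cost p)%R)
  end.

Record source := MkSource {
  Info : Type;
  info0 : Info;
  src_update : Info -> tr -> Info;
  src_refine : Info -> St T -> Info
}.

(** Reachable information: K lists s_I and the targets of the transitions
    updated so far. *)
Inductive reachable (sg : source) : Info sg -> seq (St T) -> Prop :=
| reach0 : reachable (info0 sg) [:: @sI T]
| reach_ref i K s : reachable i K -> s \in K ->
                    reachable (src_refine i s) K
| reach_upd i K t : reachable i K -> t \in @Tr T -> t_from t \in K ->
                    reachable (src_update i t) (t_to t :: K).

Definition reachable_info (sg : source) (i : Info sg) : Prop :=
  exists K, reachable i K.

Definition heuristic (sg : source) := St T -> Info sg -> ext.

Definition heur_nonneg (sg : source) (h : heuristic sg) : Prop :=
  forall s i, match h s i with Fin r => (0 <= r)%R | Inf => True end.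

Definition dyn_admissible (sg : source) (h : heuristic sg) : Prop :=
  forall s i v, reachable_info i -> is_hstar s v -> ext_le (h s i) v.

Definition dyn_consistent (sg : source) (h : heuristic sg) : Prop :=
  forall t i, t \in @Tr T -> reachable_info i ->
    ext_le (h (t_from t) i) (ext_addR (@cost T (t_lab t)) (h (t_to t) i)).

Definition dyn_monotonic (sg : source) (h : heuristic sg) : Prop :=
  forall i, reachable_info i ->
    (forall s t, t \in @Tr T -> ext_le (h s i) (h s (src_update i t))) /\
    (forall s s', ext_le (h s i) (h s (src_refine i s'))).

(** The information of the source is changed only by update operations:
    refine is the identity. *)
Definition refine_trivial (sg : source) : Prop :=
  forall (i : Info sg) s, src_refine i s = i.

Definition pinfo := St T -> option (R * option tr).

Definition pinfo0 : pinfo :=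
  fun s => if s == @sI T then Some (0%R, None) else None.

Definition pupdate (ip : pinfo) (t : tr) : pinfo :=
  match ip (t_from t) with
  | None => ip
  | Some (g, _) =>
      let ng := (g + @cost T (t_lab t))%R in
      let better :=
        match ip (t_to t) with
        | None => true
        | Some (g', _) => if Rle_dec ng g' then true else false
        end in
      if better then (fun s => if s == t_to t then Some (ng, Some t) else ip s)
      else ip
  end.

Definition prefine (ip : pinfo) (s : St T) : pinfo := ip.

Definition sigma_p : source := MkSource pinfo0 pupdate prefine.

(** g-component of the parent information (only read on defined entries). *)
Definition gof (ip : pinfo) (s : St T) : R :=
  match ip s with Some (g, _) => g | None => 0%R end.

Inductive status := Running | Solved of St T | Unsolvable.

Definition entry := (St T * R * R)%type.   (* <s, g, h> *)
Definition key (e : entry) : R := (e.1.2 + e.2)%R.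

Definition fupd (f : St T -> bool) (x : St T) (b : bool) : St T -> bool :=
  fun y => if y == x then b else f y.

Section Run.
Variable sh : source.
Variable h : heuristic sh.

Record config := MkConfig {
  c_ip : Info sigma_p;
  c_ih : Info sh;
  c_known : St T -> bool;
  c_closed : St T -> bool;
  c_open : seq entry;
  c_status : status
}.

Definition init_config : config :=
  MkConfig (info0 sigma_p) (info0 sh) (fun s => s == @sI T) (fun _ => false)
    (match h (@sI T) (info0 sh) with
     | Fin r => [:: (@sI T, gof (info0 sigma_p) (@sI T), r)]
     | Inf => [::]
     end)
    Running.

(** Processing one outgoing transition t of the expanded state.
    [reopen = true] is Dynamic A*; [reopen = false] is the variant that
    omits the reopening (s' is never removed from Closed). *)
Definition process_succ (reopen : bool) (c : config) (t : tr) : config :=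
  let s' := t_to t in
  let old := if c_known c s' then Some (gof (c_ip c) s') else None in
  let ip := src_update (c_ip c) t in
  let ih := src_update (c_ih c) t in
  let known := fupd (c_known c) s' true in
  let gnew := gof ip s' in
  match h s' ih with
  | Inf => MkConfig ip ih known (c_closed c) (c_open c) (c_status c)
  | Fin hv =>
      match old with
      | None => MkConfig ip ih known (c_closed c)
                  (rcons (c_open c) (s', gnew, hv)) (c_status c)
      | Some o =>
          if Rlt_dec gnew o then
            MkConfig ip ih known
              (if reopen then fupd (c_closed c) s' false else c_closed c)
              (rcons (c_open c) (s', gnew, hv)) (c_status c)
          else MkConfig ip ih known (c_closed c) (c_open c) (c_status c)
      end
  end.

Definition succs (s : St T) : seq tr := [seq t <- enum (@Tr T) | t_from t == s].

Definition is_min_split (c : config) (o1 : seq entry) (e : entry) (o2 : seq entry) :=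
  c_open c = o1 ++ e :: o2 /\
  forall o1' e' o2', c_open c = o1' ++ e' :: o2' -> (key e <= key e')%R.

Inductive step (reeval reopen : bool) : config -> config -> Prop :=
| step_unsolvable c :
    c_status c = Running -> c_open c = [::] ->
    step reeval reopen c
      (MkConfig (c_ip c) (c_ih c) (c_known c) (c_closed c) [::] Unsolvable)
| step_skip c o1 s g hh o2 :
    c_status c = Running -> is_min_split c o1 (s, g, hh) o2 ->
    c_closed c s ->
    step reeval reopen c
      (MkConfig (c_ip c) (c_ih c) (c_known c) (c_closed c) (o1 ++ o2) Running)
| step_reeval c o1 s g hh o2 :
    c_status c = Running -> is_min_split c o1 (s, g, hh) o2 ->
    ~~ c_closed c s ->
    reeval = true ->
    ext_lt (Fin hh) (h s (src_refine (c_ih c) s)) ->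
    let ip1 := src_refine (c_ip c) s in
    let ih1 := src_refine (c_ih c) s in
    step reeval reopen c
      (MkConfig ip1 ih1 (c_known c) (c_closed c)
         (o1 ++ o2 ++ match h s ih1 with
                       | Fin r => [:: (s, gof ip1 s, r)]
                       | Inf => [::]
                       end) Running)
| step_goal c o1 s g hh o2 :
    c_status c = Running -> is_min_split c o1 (s, g, hh) o2 ->
    ~~ c_closed c s ->
    ~ (reeval = true /\ ext_lt (Fin hh) (h s (src_refine (c_ih c) s))) ->
    s \in @goal T ->
    step reeval reopen c
      (MkConfig (src_refine (c_ip c) s) (src_refine (c_ih c) s) (c_known c)
         (fupd (c_closed c) s true) (o1 ++ o2) (Solved s))
| step_expand c o1 s g hh o2 ts :
    c_status c = Running -> is_min_split c o1 (s, g, hh) o2 ->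
    ~~ c_closed c s ->
    ~ (reeval = true /\ ext_lt (Fin hh) (h s (src_refine (c_ih c) s))) ->
    s \notin @goal T ->
    perm_eq ts (succs s) ->
    step reeval reopen c
      (foldl (process_succ reopen)
         (MkConfig (src_refine (c_ip c) s) (src_refine (c_ih c) s) (c_known c)
            (fupd (c_closed c) s true) (o1 ++ o2) Running) ts).

Inductive star (r : config -> config -> Prop) : config -> config -> Prop :=
| star_refl c : star r c c
| star_step c1 c2 c3 : r c1 c2 -> star r c2 c3 -> star r c1 c3.

Definition final (c : config) : Prop := c_status c <> Running.

Definition reopens (c c' : config) : Prop :=
  exists s, c_closed c s /\ ~~ c_closed c' s.

End Run.

Inductive follow (ip : pinfo) : St T -> seq tr -> Prop :=
| follow_init : follow ip (@sI T) [::]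
| follow_step s p t g :
    s <> @sI T -> ip s = Some (g, Some t) -> t_to t = s ->
    follow ip (t_from t) p -> follow ip s (rcons p t).

Definition returns (sh : source) (c : config sh) (p : seq tr) : Prop :=
  exists s, c_status c = Solved s /\ follow (c_ip c) s p.

Definition suboptimal (p : seq tr) : Prop :=
  exists r, is_hstar (@sI T) (Fin r) /\ (r < path_cost p)%R.

End DynAstar.

From HB Require Import structures.
From mathcomp Require Import all_boot.
From Stdlib Require Import Reals Lra FunctionalExtensionality.

Set Implicit Arguments.
Unset Strict Implicit.
Unset Printing Implicit Defensive.

(* The counterexample has optimal path I -> B -> A -> G of cost 13, next to
   I -> A -> G (cost 15) and I -> E -> G (cost 14).  The heuristic is 0 until the
   transition I -> B has been generated and equals h^* from then on; since it
   only ever grows, it is dyn-admissible, dyn-consistent and dyn-monotonic.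
   Expanding I generates A while h is still 0, so A is expanded with g(A) = 5
   before B; expanding B then finds g(A) = 3 and has to reopen A.  If A stays
   closed, the search continues through E and returns I -> E -> G. *)

Local Open Scope R_scope.

Section Potentials.
Variables (T : TS) (f : St T -> R).
Hypothesis f_consistent :
  forall t, t \in @Tr T -> f (t_from t) <= @cost T (t_lab t) + f (t_to t).
Hypothesis f_goal : forall g, g \in @goal T -> f g <= 0.

Lemma potential_le_path_cost s p g :
  is_path s p g -> g \in @goal T -> f s <= path_cost p.
Proof.
elim=> [s' /f_goal //| t p' s' t_in _ IHp /IHp le_p].
by have := f_consistent t_in; rewrite /=; lra.
Qed.

Lemma is_hstar_potential s p g :
  g \in @goal T -> is_path s p g -> path_cost p = f s -> is_hstar s (Fin (f s)).
Proof.
move=> g_goal p_path p_cost; split; first by exists p, g.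
by move=> p' g' g'_goal /potential_le_path_cost; apply.
Qed.

Lemma potential_le_hstar s r : is_hstar s (Fin r) -> f s <= r.
Proof.
by case=> -[p [g [g_goal [p_path <-]]]] _; apply: potential_le_path_cost p_path g_goal.
Qed.

End Potentials.

Lemma cat_cons_notin_inj (X : Type) (x : X) l1 l2 o1 o2 :
  ~ List.In x l1 -> ~ List.In x l2 ->
  o1 ++ x :: o2 = l1 ++ x :: l2 -> o1 = l1 /\ o2 = l2.
Proof.
elim: o1 l1 => [|y o1 IHo] [|z l1] /= x_l1 x_l2 [].
- by move=> ->.
- by move=> x_z _; exfalso; apply: x_l1; left; rewrite x_z.
- by move=> -> eq_tl; exfalso; apply: x_l2; rewrite -eq_tl; apply: List.in_elt.
- move=> -> eq_tl; have x_l1' : ~ List.In x l1 by move=> x_in; apply: x_l1; right.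
  by have [-> ->] := IHo l1 x_l1' x_l2 eq_tl.
Qed.

Section DynAstarSteps.
Variables (T : TS) (sh : source T) (h : heuristic sh).
Implicit Types (c : config sh) (e : entry T).

Lemma in_open_split (l1 l2 o1 o2 : seq (entry T)) e e' :
  l1 ++ e :: l2 = o1 ++ e' :: o2 -> e' = e \/ List.In e' (l1 ++ l2).
Proof.
move=> eq_open; have : List.In e' (l1 ++ e :: l2) by rewrite eq_open; apply: List.in_elt.
by rewrite !List.in_app_iff /= => -[|[->|]]; auto.
Qed.

Lemma is_min_split_of_le c l1 e l2 :
  c_open c = l1 ++ e :: l2 -> (forall x, List.In x (l1 ++ l2) -> key e <= key x) ->
  is_min_split c l1 e l2.
Proof.
move=> open_c le_e; split=> // o1 e' o2; rewrite open_c => /in_open_split.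
by case=> [->|/le_e //]; apply: Rle_refl.
Qed.

Lemma is_min_split_strict c l1 e l2 o1 e' o2 :
  c_open c = l1 ++ e :: l2 -> (forall x, List.In x (l1 ++ l2) -> key e < key x) ->
  is_min_split c o1 e' o2 -> [/\ e' = e, o1 = l1 & o2 = l2].
Proof.
move=> open_c lt_e [open_c' min_e'].
have e'_e : e' = e.
  have := min_e' _ _ _ open_c; rewrite open_c in open_c'.
  by case: (in_open_split open_c') => [//|/lt_e]; lra.
subst e'; rewrite open_c {open_c} in open_c'.
have e_notin l : (forall x, List.In x l -> List.In x (l1 ++ l2)) -> ~ List.In e l.
  by move=> sub_l /sub_l /lt_e; lra.
have [||-> ->] // := cat_cons_notin_inj _ _ (esym open_c');
  by apply: e_notin=> x; rewrite List.in_app_iff; tauto.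
Qed.

Lemma step_strict_min ro c l1 s g hh l2 c' :
  c_open c = l1 ++ (s, g, hh) :: l2 ->
  (forall x, List.In x (l1 ++ l2) -> key (s, g, hh) < key x) ->
  step h false ro c c' ->
  if c_closed c s then
    c' = MkConfig (c_ip c) (c_ih c) (c_known c) (c_closed c) (l1 ++ l2) (Running T)
  else if s \in @goal T then
    c' = MkConfig (src_refine (c_ip c) s) (src_refine (c_ih c) s) (c_known c)
           (fupd (c_closed c) s true) (l1 ++ l2) (Solved s)
  else exists2 ts, perm_eq ts (succs s) &
    c' = foldl (process_succ h ro)
           (MkConfig (src_refine (c_ip c) s) (src_refine (c_ih c) s) (c_known c)
              (fupd (c_closed c) s true) (l1 ++ l2) (Running T)) ts.
Proof.
move=> + + step_c; case: step_c => {c'}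
  [c0 _ open_c0 | c0 o1 s0 g0 hh0 o2 _ min_e closed_s
  | | c0 o1 s0 g0 hh0 o2 _ min_e open_s _ goal_s
  | c0 o1 s0 g0 hh0 o2 ts _ min_e open_s _ goal_s perm_ts] // open_c lt_e;
  try (have [[? ? ?] ? ?] := is_min_split_strict open_c lt_e min_e; subst).
- by rewrite open_c0 in open_c; case: l1 open_c {lt_e}.
- by rewrite closed_s.
- by rewrite (negbTE open_s) goal_s.
- by rewrite (negbTE open_s) (negbTE goal_s); exists ts.
Qed.

Section Forward.
Variables (ro : bool) (c : config sh) (l1 l2 : seq (entry T)) (s : St T) (g hh : R).
Hypotheses (running_c : c_status c = Running T)
           (open_c : c_open c = l1 ++ (s, g, hh) :: l2)
           (min_s : forall x, List.In x (l1 ++ l2) -> key (s, g, hh) <= key x).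

Variable c' : config sh.

Lemma step_skip_of_le :
  c_closed c s ->
  MkConfig (c_ip c) (c_ih c) (c_known c) (c_closed c) (l1 ++ l2) (Running T) = c' ->
  step h false ro c c'.
Proof. by move=> closed_s <-; apply: step_skip running_c (is_min_split_of_le open_c min_s) _. Qed.

Lemma step_goal_of_le :
  ~~ c_closed c s -> s \in @goal T ->
  MkConfig (src_refine (c_ip c) s) (src_refine (c_ih c) s) (c_known c)
    (fupd (c_closed c) s true) (l1 ++ l2) (Solved s) = c' ->
  step h false ro c c'.
Proof.
move=> open_s goal_s <-.
apply: (step_goal ro running_c (is_min_split_of_le open_c min_s) open_s _ goal_s).
by case.
Qed.

Lemma step_expand_of_le ts :
  ~~ c_closed c s -> s \notin @goal T -> perm_eq ts (succs s) ->
  foldl (process_succ h ro)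
    (MkConfig (src_refine (c_ip c) s) (src_refine (c_ih c) s) (c_known c)
       (fupd (c_closed c) s true) (l1 ++ l2) (Running T)) ts = c' ->
  step h false ro c c'.
Proof.
move=> open_s goal_s perm_ts <-.
apply: (step_expand ro running_c (is_min_split_of_le open_c min_s) open_s _ goal_s perm_ts).
by case.
Qed.

End Forward.

Lemma step_strict_min_deterministic ro c c' c'' l1 s g hh l2 :
  step h false ro c c' -> step h false ro c c'' ->
  c_open c = l1 ++ (s, g, hh) :: l2 ->
  (forall x, List.In x (l1 ++ l2) -> key (s, g, hh) < key x) ->
  (size (succs s) <= 1)%nat -> c' = c''.
Proof.
move=> step_c' step_c'' open_c lt_s succs_small.
move: step_c' step_c'' => /(step_strict_min open_c lt_s) + /(step_strict_min open_c lt_s).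
case: (c_closed c s) => [-> -> // |]; case: (_ \in _) => [-> -> // |].
move=> [ts' perm_ts' ->] [ts perm_ts ->].
by rewrite (perm_small_eq succs_small perm_ts) (perm_small_eq succs_small perm_ts').
Qed.

Lemma step_running re ro c c' : step h re ro c c' -> c_status c = Running T.
Proof. by case. Qed.

Lemma star_step_final re ro c c3 :
  final c -> star (step h re ro) c c3 -> c3 = c.
Proof.
by move=> + star_c; case: star_c => // ? ? ? /step_running running _ /(_ running).
Qed.

Lemma star_step_forced re ro c d c3 :
  (forall c', step h re ro c c' -> c' = d) -> final c3 -> ~ final c ->
  star (step h re ro) c c3 -> star (step h re ro) d c3.
Proof.
move=> + + + star_c.
case: star_c => [? _ final_c /(_ final_c) // | ? ? ? step_c star_c forced].
by rewrite -(forced _ step_c).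
Qed.

End DynAstarSteps.

Inductive node := I | A | B | E | G.
Inductive edge := IA | IB | BA | AG | IE | EG.

Definition node_code (s : node) : 'I_5 :=
  match s with
  | I => @Ordinal 5 0 isT | A => @Ordinal 5 1 isT | B => @Ordinal 5 2 isT
  | E => @Ordinal 5 3 isT | G => @Ordinal 5 4 isT
  end.
Definition node_decode (i : 'I_5) : node :=
  match val i with 0 => I | 1 => A | 2 => B | 3 => E | _ => G end.
Lemma node_codeK : cancel node_code node_decode.
Proof. by case. Qed.
HB.instance Definition _ := Finite.copy node (can_type node_codeK).

Definition edge_code (e : edge) : 'I_6 :=
  match e with
  | IA => @Ordinal 6 0 isT | IB => @Ordinal 6 1 isT | BA => @Ordinal 6 2 isT
  | AG => @Ordinal 6 3 isT | IE => @Ordinal 6 4 isT | EG => @Ordinal 6 5 isT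
  end.
Definition edge_decode (i : 'I_6) : edge :=
  match val i with 0 => IA | 1 => IB | 2 => BA | 3 => AG | 4 => IE | _ => EG end.
Lemma edge_codeK : cancel edge_code edge_decode.
Proof. by case. Qed.
HB.instance Definition _ := Finite.copy edge (can_type edge_codeK).

Definition ecost (e : edge) : R :=
  match e with IA => 5 | IB => 2 | BA => 1 | AG => 10 | IE => 1 | EG => 13 end.
Definition esrc (e : edge) : node :=
  match e with IA | IB | IE => I | BA => B | AG => A | EG => E end.
Definition edst (e : edge) : node :=
  match e with IA | BA => A | IB => B | AG | EG => G | IE => E end.

Lemma ecost_ge0 e : 0 <= ecost e.
Proof. by case: e => /=; lra. Qed.

Definition ex_TS : TS :=
  @MkTS node edge ecost ecost_ge0 [set (esrc e, e, edst e) | e : edge] I [set G].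

Definition etr (e : edge) : tr ex_TS := (esrc e, e, edst e).

Lemma mem_ex_Tr (t : tr ex_TS) : (t \in @Tr ex_TS) = (t == etr (t_lab t)).
Proof. by apply/imsetP/eqP => [[e _ ->] // | ->]; exists (t_lab t). Qed.

Definition out_edges (s : node) : seq edge :=
  match s with I => [:: IA; IB; IE] | A => [:: AG] | B => [:: BA] | E => [:: EG] | G => [::] end.

Lemma perm_succs s : perm_eq (map etr (out_edges s)) (@succs ex_TS s).
Proof.
have etr_inj : injective etr by move=> e1 e2 [].
apply: uniq_perm.
- by rewrite map_inj_uniq //; case: s.
- by rewrite filter_uniq // enum_uniq.
move=> t; rewrite [RHS]mem_filter mem_enum mem_ex_Tr.
case: (eqVneq t (etr (t_lab t))) => [-> | t_not_etr]; last first.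
  by rewrite andbF; apply/mapP => -[e _ t_e]; rewrite t_e eqxx in t_not_etr.
by rewrite mem_map // andbT; case: (t_lab t); case: s.
Qed.

Definition hstar_ex (s : node) : R :=
  match s with I => 13 | A => 10 | B => 11 | E => 13 | G => 0 end.

Lemma hstar_ex_ge0 s : 0 <= hstar_ex s.
Proof. by case: s => /=; lra. Qed.

Lemma hstar_ex_consistent (t : tr ex_TS) : t \in @Tr ex_TS ->
  hstar_ex (t_from t) <= ecost (t_lab t) + hstar_ex (t_to t).
Proof. by rewrite mem_ex_Tr => /eqP ->; case: (t_lab t) => /=; lra. Qed.

Lemma hstar_ex_goal s : s \in @goal ex_TS -> hstar_ex s <= 0.
Proof. by rewrite inE => /eqP -> /=; lra. Qed.

Definition seen_IB : source ex_TS :=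
  @MkSource ex_TS bool false (fun i t => i || (t_lab t == IB)) (fun i _ => i).

Definition ex_h : heuristic seen_IB :=
  fun s (i : bool) => Fin (if i then hstar_ex s else 0).

Lemma ex_h_nonneg : heur_nonneg ex_h.
Proof. by move=> s [] /=; [apply: hstar_ex_ge0 | lra]. Qed.

Lemma ex_h_admissible : dyn_admissible ex_h.
Proof.
move=> s i [r|] _ // /(potential_le_hstar hstar_ex_consistent hstar_ex_goal).
by have := hstar_ex_ge0 s; case: i => /=; lra.
Qed.

Lemma ex_h_consistent : dyn_consistent ex_h.
Proof.
move=> t [] t_in _ /=; first exact: hstar_ex_consistent.
by have := ecost_ge0 (t_lab t); lra.
Qed.

Lemma ex_h_monotonic : dyn_monotonic ex_h.
Proof.
move=> i _; split=> [s t _ | s s' /=]; last lra.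
by case: i => /=; [lra | case: eqP => _; [apply: hstar_ex_ge0 | lra]].
Qed.

Notation ex_config := (config seen_IB).

Definition parents_I : pinfo ex_TS := fun s =>
  match s with
  | I => Some (0, None) | A => Some (5, Some (etr IA)) | B => Some (2, Some (etr IB))
  | E => Some (1, Some (etr IE)) | G => None
  end.
Definition parents_A : pinfo ex_TS :=
  fun s => if s == G then Some (15, Some (etr AG)) else parents_I s.
Definition parents_B : pinfo ex_TS :=
  fun s => if s == A then Some (3, Some (etr BA)) else parents_A s.
Definition parents_E : pinfo ex_TS :=
  fun s => if s == G then Some (14, Some (etr EG)) else parents_B s.

Definition after_I : ex_config :=
  @MkConfig _ seen_IB parents_I true (fun s => s != G) (fun s => s == I)
    [:: (A, 5, 0); (B, 2, 11); (E, 1, 13)] (Running ex_TS).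

Ltac decide_reals :=
  repeat match goal with
  | |- context [Rle_dec ?a ?b] => case: (Rle_dec a b) => ? /=; try (exfalso; lra)
  | |- context [Rlt_dec ?a ?b] => case: (Rlt_dec a b) => ? /=; try (exfalso; lra)
  end.

Ltac unfold_run :=
  do 2 (rewrite /=; unfold process_succ, gof, pupdate, prefine, pinfo0, fupd,
          parents_I, parents_A, parents_B, parents_E); rewrite /=.

Ltac config_eq :=
  unfold_run; decide_reals; congr MkConfig;
  try (apply: functional_extensionality => -[]); unfold_run; decide_reals;
  try reflexivity; repeat f_equal; lra.

Ltac keys_ok := move=> x /=; intuition (subst; rewrite /key /=; lra).

Lemma expand_I : step ex_h false true (init_config ex_h) after_I.
Proof.
apply: (step_expand_of_le (l1 := [::]) _ _ _ _ _ (perm_succs I)) => //.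
- by rewrite inE.
- config_eq.
Qed.

Definition after_A : ex_config :=
  @MkConfig _ seen_IB parents_A true (fun _ => true) (mem [:: I; A])
    [:: (B, 2, 11); (E, 1, 13); (G, 15, 0)] (Running ex_TS).

Definition after_B_reopen : ex_config :=
  @MkConfig _ seen_IB parents_B true (fun _ => true) (mem [:: I; B])
    [:: (E, 1, 13); (G, 15, 0); (A, 3, 10)] (Running ex_TS).

Definition after_B : ex_config :=
  @MkConfig _ seen_IB parents_B true (fun _ => true) (mem [:: I; A; B])
    [:: (E, 1, 13); (G, 15, 0); (A, 3, 10)] (Running ex_TS).

Definition after_skip_A : ex_config :=
  @MkConfig _ seen_IB parents_B true (fun _ => true) (mem [:: I; A; B])
    [:: (E, 1, 13); (G, 15, 0)] (Running ex_TS).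

Definition after_E : ex_config :=
  @MkConfig _ seen_IB parents_E true (fun _ => true) (mem [:: I; A; B; E])
    [:: (G, 15, 0); (G, 14, 0)] (Running ex_TS).

Definition solved : ex_config :=
  @MkConfig _ seen_IB parents_E true (fun _ => true) (fun _ => true)
    [:: (G, 15, 0)] (@Solved ex_TS G).

Lemma expand_A : step ex_h false true after_I after_A.
Proof.
apply: (step_expand_of_le (l1 := [::]) _ _ _ _ _ (perm_succs A)) => //.
- by keys_ok.
- by rewrite inE.
- config_eq.
Qed.

Lemma expand_B ro : step ex_h false ro after_A (if ro then after_B_reopen else after_B).
Proof.
apply: (step_expand_of_le (l1 := [::]) _ _ _ _ _ (perm_succs B)) => //.
- by keys_ok.
- by rewrite inE.
- by case: ro; config_eq.
Qed.

Lemma skip_A : step ex_h false false after_B after_skip_A.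
Proof.
by apply: (@step_skip_of_le _ _ ex_h false after_B [:: (E, 1, 13); (G, 15, 0)] [::] A 3 10);
  [| | keys_ok | | reflexivity].
Qed.

Lemma expand_E : step ex_h false false after_skip_A after_E.
Proof.
apply: (step_expand_of_le (l1 := [::]) _ _ _ _ _ (perm_succs E)) => //.
- by keys_ok.
- by rewrite inE.
- config_eq.
Qed.

Lemma pop_G : step ex_h false false after_E solved.
Proof.
apply: (@step_goal_of_le _ _ ex_h false after_E [:: (G, 15, 0)] [::] G 14 0) => //.
- by keys_ok.
- by rewrite inE.
- config_eq.
Qed.

Lemma size_succs_le1 s : s != I -> (size (@succs ex_TS s) <= 1)%nat.
Proof. by rewrite -(perm_size (perm_succs s)); case: s. Qed.

Lemma expand_B_forced c' : step ex_h false false after_A c' -> c' = after_B.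
Proof.
move=> step_c'.
apply: (step_strict_min_deterministic step_c' (expand_B false) (l1 := [::]) erefl).
- by keys_ok.
- exact: size_succs_le1.
Qed.

Lemma skip_A_forced c' : step ex_h false false after_B c' -> c' = after_skip_A.
Proof.
move=> step_c'; apply: (step_strict_min_deterministic step_c' skip_A
  (l1 := [:: (E, 1, 13); (G, 15, 0)] : seq (entry ex_TS)) erefl).
- by keys_ok.
- exact: size_succs_le1.
Qed.

Lemma expand_E_forced c' : step ex_h false false after_skip_A c' -> c' = after_E.
Proof.
move=> step_c'.
apply: (step_strict_min_deterministic step_c' expand_E (l1 := [::]) erefl).
- by keys_ok.
- exact: size_succs_le1.
Qed.

Lemma pop_G_forced c' : step ex_h false false after_E c' -> c' = solved.
Proof.
move=> step_c'; apply: (step_strict_min_deterministic step_c' pop_G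
  (l1 := [:: (G, 15, 0)] : seq (entry ex_TS)) erefl).
- by keys_ok.
- exact: size_succs_le1.
Qed.

Lemma run_without_reopening c3 :
  star (step ex_h false false) after_A c3 -> final c3 -> c3 = solved.
Proof.
move=> run final_c3; apply: star_step_final => //.
apply: (star_step_forced pop_G_forced) => //.
apply: (star_step_forced expand_E_forced) => //.
apply: (star_step_forced skip_A_forced) => //.
exact: (star_step_forced expand_B_forced).
Qed.

Lemma solved_returns : returns solved [:: etr IE; etr EG].
Proof.
exists G; split => //.
apply: (@follow_step ex_TS parents_E G [:: etr IE] (etr EG) 14) => //.
apply: (@follow_step ex_TS parents_E E [::] (etr IE) 1) => //.
exact: follow_init.
Qed.

Lemma hstar_I : is_hstar (T := ex_TS) I (Fin 13).
Proof.
have opt_path : is_path (T := ex_TS) I [:: etr IB; etr BA; etr AG] G.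
  apply: (@path_cons _ (etr IB)); first by rewrite mem_ex_Tr.
  apply: (@path_cons _ (etr BA)); first by rewrite mem_ex_Tr.
  apply: (@path_cons _ (etr AG)); first by rewrite mem_ex_Tr.
  exact: path_nil.
apply: (is_hstar_potential hstar_ex_consistent hstar_ex_goal _ opt_path).
- by rewrite inE.
- by rewrite /path_cost /=; lra.
Qed.

Lemma solved_suboptimal : suboptimal [:: etr IE; etr EG].
Proof. by exists 13; split; [exact: hstar_I | rewrite /path_cost /=; lra]. Qed.

Theorem mainTheorem14 :
  exists (T : TS) (sh : source T) (h : heuristic sh),
    heur_nonneg h /\ dyn_admissible h /\ dyn_consistent h /\
    dyn_monotonic h /\ refine_trivial sh /\
    exists c1 c2 : config sh,
      star (step h false true) (init_config h) c1 /\
      step h false true c1 c2 /\ reopens c1 c2 /\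
      (exists c3, star (step h false false) c1 c3 /\ final c3) /\
      (forall c3, star (step h false false) c1 c3 -> final c3 ->
         exists p, returns c3 p /\ suboptimal p).
Proof.
exists ex_TS, seen_IB, ex_h.
split; first exact: ex_h_nonneg.
split; first exact: ex_h_admissible.
split; first exact: ex_h_consistent.
split; first exact: ex_h_monotonic.
split; first by [].
exists after_A, after_B_reopen; split; last split; last split; last split.
- exact: star_step expand_I (star_step expand_A (star_refl _ _)).
- exact: expand_B true.
- by exists A.
- exists solved; split => //.
  exact: star_step (expand_B false)
           (star_step skip_A (star_step expand_E (star_step pop_G (star_refl _ _)))).
- move=> c3 /run_without_reopening run /run ->.
  by exists [:: etr IE; etr EG]; split; [apply: solved_returns | apply: solved_suboptimal].
Qed.
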